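(* Let $X$ be a CAT(0) Euclidean polygonal complex, let $x_1,x_2,x_3,x_4\in X$, and for $1\le i\le 4$ let $W_i$ be the full triangle spanned by the three points $\{x_1,x_2,x_3,x_4\}\setminus\{x_i\}$. If $p\in W_i$ for some $i$, then there exists $j\neq i$ with $p\in W_j$.
   Context: A CAT(0) Euclidean polygonal complex is a 2-dimensional polygonal complex whose cells are convex Euclidean polygons, with its induced length metric, assumed CAT(0). $\overline{ab}$ denotes the unique geodesic between $a,b$; $\triangle(x,y,z)=\overline{xy}\cup\overline{yz}\cup\overline{zx}$. The full triangle $\blacktriangle(x,y,z)$ is the union of $\triangle(x,y,z)$ with the set of points $p\in X\setminus\triangle(x,y,z)$ for which $\triangle(x,y,z)$ is not null-homotopic in $X\setminus\{p\}$. *)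

From Stdlib Require Import Reals List.
Open Scope R_scope.

Definition pt := (R * R)%type.

Definition edist (u v : pt) : R :=
  sqrt ((fst u - fst v)^2 + (snd u - snd v)^2).

Fixpoint conv (L : list pt) : pt -> Prop :=
  match L with
  | nil => fun _ => False
  | v :: nil => fun q => q = v
  | v :: L' => fun q => exists t w, 0 <= t <= 1 /\ conv L' w /\
                 q = (t * fst v + (1 - t) * fst w, t * snd v + (1 - t) * snd w)
  end.

Definition convex_polygon (P : pt -> Prop) : Prop :=
  exists L : list pt, L <> nil /\ forall q, P q <-> conv L q.

Definition face (P F : pt -> Prop) : Prop :=
  (forall q, F q <-> P q) \/
  exists a b c : R, (a <> 0 \/ b <> 0) /\
    (forall q, P q -> a * fst q + b * snd q <= c) /\
    (forall q, F q <-> (P q /\ a * fst q + b * snd q = c)).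

Definition carrier (P : pt -> Prop) (x : pt) : pt -> Prop :=
  fun y => P y /\ forall F, face P F -> F x -> F y.

(* an m-string from x to y: a list of steps (l, a, b) with a, b in the cell C l;
   consecutive steps are glued: f l b of one step equals f l' a' of the next *)
Fixpoint is_string {X I : Type} (C : I -> pt -> Prop) (f : I -> pt -> X)
    (x y : X) (s : list (I * pt * pt)) : Prop :=
  match s with
  | nil => x = y
  | (l, a, b) :: s' => C l a /\ C l b /\ f l a = x /\ is_string C f (f l b) y s'
  end.

Fixpoint string_length {I : Type} (s : list (I * pt * pt)) : R :=
  match s with
  | nil => 0
  | (_, a, b) :: s' => edist a b + string_length s'
  end.

(* X is the polygonal complex obtained from the convex Euclidean polygons C l
   (l : I) via the projections f l : C l -> X, with d its intrinsic length metric *)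
Definition euclidean_polygonal_complex {X I : Type} (d : X -> X -> R)
    (C : I -> pt -> Prop) (f : I -> pt -> X) : Prop :=
  (forall l, convex_polygon (C l)) /\
  (* the complex is 2-dimensional: some cell is a genuine 2-dimensional polygon *)
  (exists l u v w, C l u /\ C l v /\ C l w /\
     (fst v - fst u) * (snd w - snd u) - (snd v - snd u) * (fst w - fst u) <> 0) /\
  (forall x : X, exists l a, C l a /\ f l a = x) /\
  (forall l a b, C l a -> C l b -> f l a = f l b -> a = b) /\
  (* gluings are isometries between faces *)
  (forall l m a b, C l a -> C m b -> f l a = f m b ->
     exists h : pt -> pt,
       h a = b /\
       (forall u, carrier (C l) a u -> carrier (C m) b (h u)) /\
       (forall v, carrier (C m) b v -> exists u, carrier (C l) a u /\ h u = v) /\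
       (forall u v, carrier (C l) a u -> carrier (C l) a v -> edist (h u) (h v) = edist u v) /\
       (forall u, carrier (C l) a u -> f l u = f m (h u))) /\
  (forall x y : X,
     (forall s, is_string C f x y s -> d x y <= string_length s) /\
     (forall eps, 0 < eps -> exists s, is_string C f x y s /\ string_length s < d x y + eps)).

Definition is_metric {X : Type} (d : X -> X -> R) : Prop :=
  (forall x y, 0 <= d x y) /\ (forall x y, d x y = 0 <-> x = y) /\
  (forall x y, d x y = d y x) /\ (forall x y z, d x z <= d x y + d y z).

Definition unit_I (s : R) : Prop := 0 <= s <= 1.

Definition geodesic {X : Type} (d : X -> X -> R) (a b : X) (c : R -> X) : Prop :=
  c 0 = a /\ c 1 = b /\
  forall s t, unit_I s -> unit_I t -> d (c s) (c t) = Rabs (s - t) * d a b.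

Definition geodesic_space {X : Type} (d : X -> X -> R) : Prop :=
  forall a b : X, exists c, geodesic d a b c.

Definition seg (P Q : pt) (s : R) : pt :=
  (fst P + s * (fst Q - fst P), snd P + s * (snd Q - snd P)).

(* CAT(0) inequality for every geodesic triangle and its Euclidean comparison
   triangle; sides are given as (geodesic, start of comparison side, end) *)
Definition CAT0 {X : Type} (d : X -> X -> R) : Prop :=
  is_metric d /\ geodesic_space d /\
  forall (x y z : X) (c1 c2 c3 : R -> X) (A B D : pt),
    geodesic d x y c1 -> geodesic d y z c2 -> geodesic d z x c3 ->
    edist A B = d x y -> edist B D = d y z -> edist D A = d z x ->
    forall (S1 S2 : (R -> X) * pt * pt),
      In S1 ((c1, A, B) :: (c2, B, D) :: (c3, D, A) :: nil) ->
      In S2 ((c1, A, B) :: (c2, B, D) :: (c3, D, A) :: nil) ->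
      forall s t, unit_I s -> unit_I t ->
        let '(g1, P1, Q1) := S1 in let '(g2, P2, Q2) := S2 in
        d (g1 s) (g2 t) <= edist (seg P1 Q1 s) (seg P2 Q2 t).

Definition geod_seg {X : Type} (d : X -> X -> R) (a b : X) (q : X) : Prop :=
  exists c, geodesic d a b c /\ exists t, unit_I t /\ q = c t.

Definition triangle {X : Type} (d : X -> X -> R) (x y z : X) (q : X) : Prop :=
  geod_seg d x y q \/ geod_seg d y z q \/ geod_seg d z x q.

Definition tri_loop {X : Type} (c1 c2 c3 : R -> X) (s : R) : X :=
  if Rle_dec s (1/3) then c1 (3 * s)
  else if Rle_dec s (2/3) then c2 (3 * s - 1) else c3 (3 * s - 2).

Definition continuous_sq {X : Type} (d : X -> X -> R) (H : R -> R -> X) : Prop :=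
  forall s t, unit_I s -> unit_I t -> forall eps, 0 < eps -> exists delta, 0 < delta /\
    forall s' t', unit_I s' -> unit_I t' -> Rabs (s - s') < delta -> Rabs (t - t') < delta ->
      d (H s t) (H s' t') < eps.

Definition nullhomotopic_in {X : Type} (d : X -> X -> R) (U : X -> Prop)
    (gamma : R -> X) : Prop :=
  exists H : R -> R -> X, continuous_sq d H /\
    (forall s t, unit_I s -> unit_I t -> U (H s t)) /\
    (forall s, unit_I s -> H s 0 = gamma s /\ H s 1 = H 0 1) /\
    (forall t, unit_I t -> H 0 t = H 1 t).

Definition full_triangle {X : Type} (d : X -> X -> R) (x y z : X) (p : X) : Prop :=
  triangle d x y z p \/
  (~ triangle d x y z p /\
   forall c1 c2 c3, geodesic d x y c1 -> geodesic d y z c2 -> geodesic d z x c3 ->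
     ~ nullhomotopic_in d (fun q => q <> p) (tri_loop c1 c2 c3)).

Definition W {X : Type} (d : X -> X -> R) (x1 x2 x3 x4 : X) (i : nat) : X -> Prop :=
  match i with
  | 1%nat => full_triangle d x2 x3 x4
  | 2%nat => full_triangle d x1 x3 x4
  | 3%nat => full_triangle d x1 x2 x4
  | _ => full_triangle d x1 x2 x3
  end.

(* Let o be the point of {x1, x2, x3, x4} that is not a vertex of W_i = ▲(a, b, c); up to the
   order of their vertices, the other three full triangles are ▲(o, a, b), ▲(o, b, c) and
   ▲(o, c, a), and every edge of △(a, b, c) is an edge of one of them.  If p lies in none of
   them, the loops of these three triangles are null-homotopic in X \ {p}.  Geodesics in a
   CAT(0) space are unique, so consecutive ones among these loops share their edge to o.  Each
   null-homotopy is turned into a square whose bottom is the edge opposite to o, whose sides run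
   along the edges to o and whose top is at o; placed side by side, the three squares form a
   null-homotopy of the loop of △(a, b, c) in X \ {p}, so p is not in W_i either.  Only the
   CAT(0) metric is used, not the cell structure of the complex. *)

From Stdlib Require Import Reals Lra Lia Classical.
From Coquelicot Require Import Coquelicot.
Open Scope R_scope.

(** * Continuous maps on planar sets *)

Definition clamp (x : R) : R := Rmax 0 (Rmin 1 x).

Lemma clamp_in_01 x : 0 <= clamp x <= 1.
Proof. unfold clamp, Rmax, Rmin. repeat destruct Rle_dec; lra. Qed.

Lemma clamp_le0 x : x <= 0 -> clamp x = 0.
Proof. unfold clamp, Rmax, Rmin. repeat destruct Rle_dec; lra. Qed.

Lemma clamp_ge1 x : 1 <= x -> clamp x = 1.
Proof. unfold clamp, Rmax, Rmin. repeat destruct Rle_dec; lra. Qed.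

Lemma clamp_id x : 0 <= x <= 1 -> clamp x = x.
Proof. unfold clamp, Rmax, Rmin. repeat destruct Rle_dec; lra. Qed.

Lemma continuous_clamp x : continuous clamp x.
Proof.
  apply filterlim_locally. intros eps. exists eps. intros y Hy.
  change (Rabs (clamp y - clamp x) < eps). change (Rabs (y - x) < eps) in Hy.
  eapply Rle_lt_trans; [|exact Hy].
  unfold clamp, Rmax, Rmin, Rabs. repeat destruct Rle_dec; repeat destruct Rcase_abs; lra.
Qed.

Section RealContinuity.
Context {T : UniformSpace}.

Lemma continuous_Rplus (f g : T -> R) x :
  continuous f x -> continuous g x -> continuous (fun z => f z + g z) x.
Proof. exact (@continuous_plus T R_AbsRing R_NormedModule f g x). Qed.

Lemma continuous_Rminus (f g : T -> R) x :
  continuous f x -> continuous g x -> continuous (fun z => f z - g z) x.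
Proof. exact (@continuous_minus T R_AbsRing R_NormedModule f g x). Qed.

Lemma continuous_Rmult (f g : T -> R) x :
  continuous f x -> continuous g x -> continuous (fun z => f z * g z) x.
Proof. exact (@continuous_mult T R_AbsRing f g x). Qed.

Lemma continuous_clamp_comp (f : T -> R) x :
  continuous f x -> continuous (fun z => clamp (f z)) x.
Proof. intros Hf. exact (continuous_comp f clamp x Hf (continuous_clamp (f x))). Qed.

End RealContinuity.

Definition continuous2 (phi : R -> R -> R) : Prop :=
  forall s t, continuous (fun z : R * R => phi (fst z) (snd z)) (s, t).

Ltac continuous2_tac :=
  let s := fresh "s" in let t := fresh "t" in
  intros s t; cbv beta;
  repeat lazymatch goal with
  | |- continuous (fun z => @?f z - @?g z) _ => apply (continuous_Rminus f g)
  | |- continuous (fun z => @?f z + @?g z) _ => apply (continuous_Rplus f g)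
  | |- continuous (fun z => @?f z * @?g z) _ => apply (continuous_Rmult f g)
  | |- continuous (fun z => clamp (@?f z)) _ => apply (continuous_clamp_comp f)
  | |- continuous (fun z => fst z) _ => apply continuous_fst
  | |- continuous (fun z => snd z) _ => apply continuous_snd
  | |- continuous (fun _ => _) _ => apply continuous_const
  end.

Lemma continuous2_delta phi s t eps :
  continuous2 phi -> 0 < eps -> exists delta, 0 < delta /\
    forall s' t', Rabs (s - s') < delta -> Rabs (t - t') < delta -> Rabs (phi s t - phi s' t') < eps.
Proof.
  intros Hphi Heps.
  destruct (proj1 (filterlim_locally _ _) (Hphi s t) (mkposreal eps Heps)) as [delta Hdelta].
  exists delta. split; [apply cond_pos|]. intros s' t' Hs Ht.
  rewrite Rabs_minus_sym.
  apply (Hdelta (s', t')). split.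
  - change (Rabs (s' - s) < delta). rewrite Rabs_minus_sym. exact Hs.
  - change (Rabs (t' - t) < delta). rewrite Rabs_minus_sym. exact Ht.
Qed.

Definition rect (a b c e : R) (s t : R) : Prop := a <= s <= b /\ c <= t <= e.

Notation square := (rect 0 1 0 1).

Definition closed2 (P : R -> R -> Prop) : Prop :=
  forall s t, ~ P s t -> exists delta, 0 < delta /\
    forall s' t', Rabs (s - s') < delta -> Rabs (t - t') < delta -> ~ P s' t'.

Lemma rect_closed a b c e : closed2 (rect a b c e).
Proof.
  intros s t Hout.
  (* the largest of the four gaps is the gap of a violated inequality *)
  exists (Rmax (Rmax (a - s) (s - b)) (Rmax (c - t) (t - e))). split.
  - unfold rect in Hout. unfold Rmax.
    destruct (Rle_dec a s), (Rle_dec s b), (Rle_dec c t), (Rle_dec t e); try tauto;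
      repeat destruct Rle_dec; lra.
  - intros s' t' Hs Ht [Hs' Ht']. apply Rabs_def2 in Hs. apply Rabs_def2 in Ht.
    unfold Rmax in *. repeat destruct Rle_dec; lra.
Qed.

Section PlaneMaps.
Context {X : Type} (d : X -> X -> R).

Definition continuous2_on (P : R -> R -> Prop) (F : R -> R -> X) : Prop :=
  forall s t, P s t -> forall eps, 0 < eps -> exists delta, 0 < delta /\
    forall s' t', P s' t' -> Rabs (s - s') < delta -> Rabs (t - t') < delta ->
      d (F s t) (F s' t') < eps.

Lemma continuous_sq_iff H : continuous_sq d H <-> continuous2_on square H.
Proof.
  split.
  - intros Hc s t [Hs Ht] eps Heps. destruct (Hc s t Hs Ht eps Heps) as [delta [Hdelta Hclose]].
    exists delta. split; [exact Hdelta|]. intros s' t' [Hs' Ht']. apply Hclose; assumption.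
  - intros Hc s t Hs Ht eps Heps. destruct (Hc s t (conj Hs Ht) eps Heps) as [delta [Hdelta Hclose]].
    exists delta. split; [exact Hdelta|]. intros s' t' Hs' Ht'. apply Hclose. split; assumption.
Qed.

Lemma continuous2_on_ext P F G :
  (forall s t, P s t -> F s t = G s t) -> continuous2_on P F -> continuous2_on P G.
Proof.
  intros HFG HF s t Hst eps Heps. destruct (HF s t Hst eps Heps) as [delta [Hdelta Hclose]].
  exists delta. split; [exact Hdelta|]. intros s' t' Hst' Hs Ht.
  rewrite <- (HFG s t Hst), <- (HFG s' t' Hst'). auto.
Qed.

Lemma continuous2_on_subset P Q F :
  (forall s t, P s t -> Q s t) -> continuous2_on Q F -> continuous2_on P F.
Proof.
  intros HPQ HF s t Hst eps Heps. destruct (HF s t (HPQ s t Hst) eps Heps) as [delta [Hdelta Hclose]].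
  exists delta. auto.
Qed.

Lemma continuous2_on_comp P Q F phi psi :
  continuous2_on Q F -> continuous2 phi -> continuous2 psi ->
  (forall s t, P s t -> Q (phi s t) (psi s t)) ->
  continuous2_on P (fun s t => F (phi s t) (psi s t)).
Proof.
  intros HF Hphi Hpsi HPQ s t Hst eps Heps.
  destruct (HF _ _ (HPQ s t Hst) eps Heps) as [delta [Hdelta Hclose]].
  destruct (continuous2_delta phi s t delta Hphi Hdelta) as [delta1 [Hdelta1 Hphi']].
  destruct (continuous2_delta psi s t delta Hpsi Hdelta) as [delta2 [Hdelta2 Hpsi']].
  exists (Rmin delta1 delta2). split; [apply Rmin_glb_lt; assumption|].
  intros s' t' Hst' Hs Ht.
  pose proof (Rmin_l delta1 delta2). pose proof (Rmin_r delta1 delta2).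
  apply Hclose; [apply HPQ; exact Hst' | apply Hphi' | apply Hpsi']; lra.
Qed.

Lemma continuous2_on_swap a b c e F :
  continuous2_on (rect a b c e) F -> continuous2_on (rect c e a b) (fun t s => F s t).
Proof.
  intros HF t s [Ht Hs] eps Heps. destruct (HF s t (conj Hs Ht) eps Heps) as [delta [Hdelta Hclose]].
  exists delta. split; [exact Hdelta|].
  intros t' s' [Ht' Hs'] Dt Ds. apply Hclose; [split|..]; assumption.
Qed.

Lemma continuous2_on_union_at P Q F s t :
  closed2 Q -> continuous2_on P F -> continuous2_on Q F -> P s t ->
  forall eps, 0 < eps -> exists delta, 0 < delta /\
    forall s' t', P s' t' \/ Q s' t' -> Rabs (s - s') < delta -> Rabs (t - t') < delta ->
      d (F s t) (F s' t') < eps.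
Proof.
  intros HQ HFP HFQ Hst eps Heps.
  destruct (HFP s t Hst eps Heps) as [delta1 [Hdelta1 Hclose1]].
  assert (HnearQ : exists delta2, 0 < delta2 /\ forall s' t', Q s' t' ->
            Rabs (s - s') < delta2 -> Rabs (t - t') < delta2 -> d (F s t) (F s' t') < eps).
  { destruct (classic (Q s t)) as [Hq | Hq]; [exact (HFQ s t Hq eps Heps)|].
    destruct (HQ s t Hq) as [delta2 [Hdelta2 Hfar]].
    exists delta2. split; [exact Hdelta2|]. intros s' t' Hq' Hs Ht.
    exfalso. exact (Hfar s' t' Hs Ht Hq'). }
  destruct HnearQ as [delta2 [Hdelta2 Hclose2]].
  exists (Rmin delta1 delta2). split; [apply Rmin_glb_lt; assumption|].
  pose proof (Rmin_l delta1 delta2). pose proof (Rmin_r delta1 delta2).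
  intros s' t' [Hp | Hq] Hs Ht; [apply Hclose1 | apply Hclose2]; auto; lra.
Qed.

Lemma continuous2_on_union P Q F :
  closed2 P -> closed2 Q -> continuous2_on P F -> continuous2_on Q F ->
  continuous2_on (fun s t => P s t \/ Q s t) F.
Proof.
  intros HP HQ HFP HFQ s t [Hp | Hq] eps Heps.
  - exact (continuous2_on_union_at P Q F s t HQ HFP HFQ Hp eps Heps).
  - destruct (continuous2_on_union_at Q P F s t HP HFQ HFP Hq eps Heps) as [delta [Hdelta Hclose]].
    exists delta. split; [exact Hdelta|]. intros s' t' Hst'. apply Hclose. tauto.
Qed.

Lemma continuous2_on_paste_s a m b c e F1 F2 :
  continuous2_on (rect a m c e) F1 -> continuous2_on (rect m b c e) F2 ->
  (forall t, c <= t <= e -> F1 m t = F2 m t) ->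
  continuous2_on (rect a b c e) (fun s t => if Rle_dec s m then F1 s t else F2 s t).
Proof.
  intros H1 H2 Hseam.
  apply (continuous2_on_subset _ (fun s t => rect a m c e s t \/ rect m b c e s t)).
  { intros s t [Hs Ht]. destruct (Rle_dec s m); [left | right]; split; auto; lra. }
  apply continuous2_on_union; try apply rect_closed.
  - revert H1. apply continuous2_on_ext. intros s t [Hs _]. destruct Rle_dec; [reflexivity | lra].
  - revert H2. apply continuous2_on_ext. intros s t [Hs Ht].
    destruct Rle_dec; [|reflexivity]. replace s with m by lra. symmetry. apply Hseam. exact Ht.
Qed.

Lemma continuous2_on_paste_t a b c m e F1 F2 :
  continuous2_on (rect a b c m) F1 -> continuous2_on (rect a b m e) F2 ->
  (forall s, a <= s <= b -> F1 s m = F2 s m) ->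
  continuous2_on (rect a b c e) (fun s t => if Rle_dec t m then F1 s t else F2 s t).
Proof.
  intros H1 H2 Hseam.
  apply (continuous2_on_swap c e a b (fun t s => if Rle_dec t m then F1 s t else F2 s t)).
  apply continuous2_on_paste_s; try apply continuous2_on_swap; assumption.
Qed.

End PlaneMaps.

(** * Fillings of the square *)

Definition ramp (s : R) : R := clamp (2 * s - 1/2).

Definition plateau (s : R) : R := clamp (4 * s) + clamp (4 - 4 * s) - 1.

Lemma ramp_in_01 s : 0 <= ramp s <= 1.
Proof. apply clamp_in_01. Qed.

Lemma plateau_in_01 s : 0 <= s <= 1 -> 0 <= plateau s <= 1.
Proof. intros Hs. unfold plateau, clamp, Rmax, Rmin. repeat destruct Rle_dec; lra. Qed.

Lemma ramp_0 : ramp 0 = 0.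
Proof. apply clamp_le0. lra. Qed.

Lemma ramp_1 : ramp 1 = 1.
Proof. apply clamp_ge1. lra. Qed.

Lemma plateau_0 : plateau 0 = 0.
Proof. unfold plateau. rewrite clamp_le0, clamp_ge1; lra. Qed.

Lemma plateau_1 : plateau 1 = 0.
Proof. unfold plateau. rewrite clamp_ge1, clamp_le0; lra. Qed.

(* [s |-> (ramp s, plateau s)] runs along the left, top and right sides of the square. *)
Lemma ramp_plateau s : ramp s = 0 \/ ramp s = 1 \/ plateau s = 1.
Proof. unfold ramp, plateau, clamp, Rmax, Rmin. repeat destruct Rle_dec; lra. Qed.

Section Fillings.
Context {X : Type} (d : X -> X -> R) (U : X -> Prop).

Definition square_map (F : R -> R -> X) : Prop :=
  continuous2_on d square F /\ forall s t, square s t -> U (F s t).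

Definition fills (F : R -> R -> X) (bottom top left right : R -> X) : Prop :=
  square_map F /\
  (forall s, 0 <= s <= 1 -> F s 0 = bottom s /\ F s 1 = top s) /\
  (forall t, 0 <= t <= 1 -> F 0 t = left t /\ F 1 t = right t).

Lemma square_map_comp F phi psi :
  square_map F -> continuous2 phi -> continuous2 psi ->
  (forall s t, square s t -> square (phi s t) (psi s t)) ->
  square_map (fun s t => F (phi s t) (psi s t)).
Proof.
  intros [HF HU] Hphi Hpsi Hsq. split.
  - exact (continuous2_on_comp d _ _ F phi psi HF Hphi Hpsi Hsq).
  - intros s t Hst. apply HU, Hsq, Hst.
Qed.

Lemma fills_ext F b t l r b' t' l' r' :
  fills F b t l r ->
  (forall s, 0 <= s <= 1 -> b s = b' s /\ t s = t' s) ->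
  (forall u, 0 <= u <= 1 -> l u = l' u /\ r u = r' u) ->
  fills F b' t' l' r'.
Proof.
  intros [HF [Hbt Hlr]] Ebt Elr. split; [exact HF|]. split.
  - intros s Hs. destruct (Hbt s Hs), (Ebt s Hs). split; congruence.
  - intros u Hu. destruct (Hlr u Hu), (Elr u Hu). split; congruence.
Qed.

Lemma nullhomotopic_in_fills gamma :
  nullhomotopic_in d U gamma <-> exists F c e, fills F gamma (fun _ => c) e e.
Proof.
  split.
  - intros [H [Hc [HU [Hbt Hlr]]]]. exists H, (H 0 1), (fun t => H 0 t).
    split; [split|split].
    + apply continuous_sq_iff. exact Hc.
    + intros s t [Hs Ht]. exact (HU s t Hs Ht).
    + exact Hbt.
    + intros t Ht. split; [reflexivity | symmetry; exact (Hlr t Ht)].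
  - intros [F [c [e [[Hc HU] [Hbt Hlr]]]]]. exists F. split; [|split; [|split]].
    + apply continuous_sq_iff. exact Hc.
    + intros s t Hs Ht. exact (HU s t (conj Hs Ht)).
    + intros s Hs. destruct (Hbt s Hs) as [Hb Ht]. destruct (Hbt 0 ltac:(lra)) as [_ Ht0].
      split; congruence.
    + intros t Ht. destruct (Hlr t Ht). congruence.
Qed.

Lemma nullhomotopic_in_ext gamma gamma' :
  (forall s, 0 <= s <= 1 -> gamma s = gamma' s) ->
  nullhomotopic_in d U gamma -> nullhomotopic_in d U gamma'.
Proof.
  intros E. rewrite !nullhomotopic_in_fills. intros [F [c [e HF]]]. exists F, c, e.
  apply (fills_ext _ _ _ _ _ _ _ _ _ HF); [intros s Hs; split; auto | tauto].
Qed.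

Lemma nullhomotopic_in_closed gamma : nullhomotopic_in d U gamma -> gamma 0 = gamma 1.
Proof.
  intros [H [_ [_ [Hbt Hlr]]]].
  destruct (Hbt 0) as [E0 _]; [split; lra|]. destruct (Hbt 1) as [E1 _]; [split; lra|].
  rewrite <- E0, <- E1. apply Hlr. split; lra.
Qed.

Lemma nullhomotopic_in_rev gamma :
  nullhomotopic_in d U gamma -> nullhomotopic_in d U (fun s => gamma (1 - s)).
Proof.
  rewrite !nullhomotopic_in_fills. intros [F [c [e [HF [Hbt Hlr]]]]].
  exists (fun s t => F (1 - s) t), c, e. split; [|split].
  - apply square_map_comp; [exact HF | continuous2_tac.. |].
    intros s t [Hs Ht]. split; lra.
  - intros s Hs. apply Hbt. lra.
  - intros t Ht. destruct (Hlr t Ht). rewrite Rminus_0_r, Rminus_eq_0. split; congruence.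
Qed.

Definition rotate_loop (a : R) (gamma : R -> X) (s : R) : X :=
  if Rle_dec s (1 - a) then gamma (s + a) else gamma (s + a - 1).

Lemma nullhomotopic_in_rotate a gamma :
  0 <= a <= 1 -> nullhomotopic_in d U gamma -> nullhomotopic_in d U (rotate_loop a gamma).
Proof.
  intros Ha. rewrite !nullhomotopic_in_fills. intros [F [c [e [[HFc HFU] [Hbt Hlr]]]]].
  exists (fun s t => rotate_loop a (fun u => F u t) s), c, (fun t => F a t).
  unfold rotate_loop. split; [split|split].
  - apply continuous2_on_paste_s.
    + apply (continuous2_on_comp d _ square F); [exact HFc | continuous2_tac.. |].
      intros s t [Hs Ht]. split; lra.
    + apply (continuous2_on_comp d _ square F); [exact HFc | continuous2_tac.. |].
      intros s t [Hs Ht]. split; lra.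
    + intros t Ht. cbv beta. replace (1 - a + a - 1) with 0 by ring. replace (1 - a + a) with 1 by ring.
      destruct (Hlr t Ht). congruence.
  - intros s t [Hs Ht]. destruct Rle_dec; apply HFU; split; lra.
  - intros s Hs. destruct Rle_dec; apply Hbt; lra.
  - intros t Ht. split.
    + destruct Rle_dec; [f_equal; ring | lra].
    + destruct Rle_dec.
      * replace a with 0 by lra. destruct (Hlr t Ht). rewrite Rplus_0_r. congruence.
      * f_equal. ring.
Qed.

(* The lower half runs up the common side path of F to its constant top and back down; the
   upper half contracts this back-and-forth path to the base point. *)
Lemma fills_based F gamma c e :
  fills F gamma (fun _ => c) e e ->
  exists G, fills G (fun s => gamma (ramp s)) (fun _ => gamma 0) (fun _ => gamma 0) (fun _ => gamma 0).
Proof.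
  intros [[HFc HFU] [Hbt Hlr]].
  assert (Hbase : F 0 0 = gamma 0) by apply (Hbt 0 ltac:(lra)).
  assert (Hsides : forall t, 0 <= t <= 1 -> F 1 t = F 0 t)
    by (intros t Ht; destruct (Hlr t Ht); congruence).
  assert (Htop : forall s, 0 <= s <= 1 -> F s 1 = F 0 1)
    by (intros s Hs; destruct (Hbt s Hs), (Hbt 0 ltac:(lra)); congruence).
  pose proof ramp_in_01 as Hramp. pose proof plateau_in_01 as Hplat.
  exists (fun s t => if Rle_dec t (1/2) then F (ramp s) (2 * t * plateau s)
                     else F 0 ((2 - 2 * t) * plateau s)).
  split; [split|split].
  - apply continuous2_on_paste_t.
    + apply (continuous2_on_comp d _ square F); [exact HFc | unfold ramp, plateau; continuous2_tac.. |].
      intros s t [Hs Ht]. specialize (Hplat s Hs). split; [apply Hramp | nra].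
    + apply (continuous2_on_comp d _ square F); [exact HFc | unfold plateau; continuous2_tac.. |].
      intros s t [Hs Ht]. specialize (Hplat s Hs). split; [lra | nra].
    + intros s Hs. cbv beta. replace (2 * (1/2)) with 1 by lra. replace (2 - 1) with 1 by lra.
      rewrite !Rmult_1_l.
      destruct (ramp_plateau s) as [E | [E | E]]; rewrite E.
      * reflexivity.
      * apply Hsides, Hplat, Hs.
      * apply Htop, Hramp.
  - intros s t [Hs Ht]. specialize (Hplat s Hs). destruct Rle_dec; apply HFU; split; auto; nra.
  - intros s Hs. split.
    + destruct Rle_dec; [|lra]. rewrite !Rmult_0_r, Rmult_0_l. apply Hbt, Hramp.
    + destruct Rle_dec; [lra|]. replace (2 - 2 * 1) with 0 by lra. rewrite Rmult_0_l. exact Hbase.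
  - intros t Ht. rewrite ramp_0, ramp_1, plateau_0, plateau_1, !Rmult_0_r.
    split; destruct Rle_dec; try exact Hbase. rewrite Hsides by lra. exact Hbase.
Qed.

(* The bottom and the sides of the new square are sent to the middle and to the adjacent parts of
   the bottom of F, its top to the sides of F, where F is constant (see [ramp_plateau]). *)
Lemma fills_wedge F beta o :
  fills F beta (fun _ => o) (fun _ => o) (fun _ => o) ->
  exists T, fills T (fun s => beta (5/12 + s * (1/6))) (fun _ => o)
    (fun t => beta ((1 - t) * (5/12))) (fun t => beta ((1 - t) * (7/12) + t)).
Proof.
  intros [HF [Hbt Hlr]].
  pose proof ramp_in_01 as Hramp. pose proof plateau_in_01 as Hplat.
  exists (fun s t => F ((1 - t) * (5/12 + s * (1/6)) + t * ramp s) (t * plateau s)).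
  split; [|split].
  - apply square_map_comp; [exact HF | unfold ramp, plateau; continuous2_tac.. |].
    intros s t [Hs Ht]. specialize (Hramp s). specialize (Hplat s Hs). split; nra.
  - intros s Hs. split.
    + rewrite !Rmult_0_l, Rminus_0_r, Rmult_1_l, Rplus_0_r. apply Hbt. lra.
    + rewrite Rminus_eq_0, !Rmult_0_l, !Rmult_1_l, Rplus_0_l.
      destruct (ramp_plateau s) as [E | [E | E]]; rewrite E.
      * apply Hlr, Hplat, Hs.
      * apply Hlr, Hplat, Hs.
      * apply Hbt, Hramp.
  - intros t Ht. rewrite ramp_0, ramp_1, plateau_0, plateau_1, !Rmult_0_r. split.
    + rewrite Rmult_0_l, !Rplus_0_r. apply Hbt. nra.
    + rewrite Rmult_1_r, Rmult_1_l. replace (5/12 + 1/6) with (7/12) by field. apply Hbt. nra.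
Qed.

End Fillings.

(** * Triangle loops *)

Lemma ramp_wedge_bottom s : 0 <= s <= 1 -> ramp (5/12 + s * (1/6)) = (1 + s) / 3.
Proof. intros Hs. unfold ramp. rewrite clamp_id; lra. Qed.

Lemma ramp_wedge_left t : 0 <= t -> ramp ((1 - t) * (5/12)) = (1 - clamp (5/2 * t)) / 3.
Proof. intros Ht. unfold ramp, clamp, Rmax, Rmin. repeat destruct Rle_dec; lra. Qed.

Lemma ramp_wedge_right t : 0 <= t -> ramp ((1 - t) * (7/12) + t) = (2 + clamp (5/2 * t)) / 3.
Proof. intros Ht. unfold ramp, clamp, Rmax, Rmin. repeat destruct Rle_dec; lra. Qed.

Section TriangleLoops.
Context {X : Type} (d : X -> X -> R) (U : X -> Prop).

Definition rev_path (c : R -> X) (s : R) : X := c (1 - s).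

Lemma tri_loop_ext (c1 c2 c3 c1' c2' c3' : R -> X) s :
  (forall u, 0 <= u <= 1 -> c1 u = c1' u) -> (forall u, 0 <= u <= 1 -> c2 u = c2' u) ->
  (forall u, 0 <= u <= 1 -> c3 u = c3' u) ->
  0 <= s <= 1 -> tri_loop c1 c2 c3 s = tri_loop c1' c2' c3' s.
Proof.
  intros E1 E2 E3 Hs. unfold tri_loop.
  repeat destruct Rle_dec; [apply E1 | apply E2 | apply E3]; lra.
Qed.

Lemma tri_loop_first (c1 c2 c3 : R -> X) u : 0 <= u <= 1 -> tri_loop c1 c2 c3 (u / 3) = c1 u.
Proof. intros Hu. unfold tri_loop. destruct Rle_dec; [f_equal; field | lra]. Qed.

Lemma tri_loop_middle (c1 c2 c3 : R -> X) u :
  c1 1 = c2 0 -> 0 <= u <= 1 -> tri_loop c1 c2 c3 ((1 + u) / 3) = c2 u.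
Proof.
  intros E Hu. unfold tri_loop. destruct Rle_dec.
  - replace u with 0 by lra. rewrite <- E. f_equal. field.
  - destruct Rle_dec; [f_equal; field | lra].
Qed.

Lemma tri_loop_last (c1 c2 c3 : R -> X) u :
  c2 1 = c3 0 -> 0 <= u <= 1 -> tri_loop c1 c2 c3 ((2 + u) / 3) = c3 u.
Proof.
  intros E Hu. unfold tri_loop. destruct Rle_dec; [lra|]. destruct Rle_dec.
  - replace u with 0 by lra. rewrite <- E. f_equal. field.
  - f_equal. field.
Qed.

(* At the break points 1/3 and 2/3 the cases are closed by the matching endpoints of adjacent
   sides. *)
Ltac tri_loop_cases :=
  unfold rotate_loop, rev_path, tri_loop; repeat destruct Rle_dec; try lra;
  first
    [ f_equal; lra
    | match goal with |- ?f ?x = ?g ?y =>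
        first [ replace x with 1 by lra; replace y with 0 by lra
              | replace x with 0 by lra; replace y with 1 by lra ];
        congruence
      end ].

Lemma tri_loop_rotate (c1 c2 c3 : R -> X) s :
  c1 1 = c2 0 -> 0 <= s <= 1 ->
  tri_loop c2 c3 c1 s = rotate_loop (1/3) (tri_loop c1 c2 c3) s.
Proof. intros E Hs. tri_loop_cases. Qed.

Lemma tri_loop_rev (c1 c2 c3 : R -> X) s :
  c1 1 = c2 0 -> c2 1 = c3 0 -> 0 <= s <= 1 ->
  tri_loop (rev_path c3) (rev_path c2) (rev_path c1) s = tri_loop c1 c2 c3 (1 - s).
Proof. intros E1 E2 Hs. tri_loop_cases. Qed.

Lemma tri_loop_closed (c1 c2 c3 : R -> X) :
  nullhomotopic_in d U (tri_loop c1 c2 c3) -> c1 0 = c3 1.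
Proof.
  intros Hnull. apply nullhomotopic_in_closed in Hnull. unfold tri_loop in Hnull.
  destruct (Rle_dec 0 (1/3)); [|lra]. destruct (Rle_dec 1 (1/3)); [lra|].
  destruct (Rle_dec 1 (2/3)); [lra|]. rewrite Rmult_0_r in Hnull. rewrite Hnull. f_equal. ring.
Qed.

Lemma nullhomotopic_in_tri_loop_rotate (c1 c2 c3 : R -> X) :
  c1 1 = c2 0 -> nullhomotopic_in d U (tri_loop c1 c2 c3) -> nullhomotopic_in d U (tri_loop c2 c3 c1).
Proof.
  intros E Hnull. apply (nullhomotopic_in_rotate d U (1/3)) in Hnull; [|lra].
  revert Hnull. apply nullhomotopic_in_ext. intros s Hs. symmetry. apply tri_loop_rotate; assumption.
Qed.

Lemma nullhomotopic_in_tri_loop_rev (c1 c2 c3 : R -> X) :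
  c1 1 = c2 0 -> c2 1 = c3 0 -> nullhomotopic_in d U (tri_loop c1 c2 c3) ->
  nullhomotopic_in d U (tri_loop (rev_path c3) (rev_path c2) (rev_path c1)).
Proof.
  intros E1 E2 Hnull. apply nullhomotopic_in_rev in Hnull.
  revert Hnull. apply nullhomotopic_in_ext. intros s Hs. symmetry. apply tri_loop_rev; assumption.
Qed.

Lemma triangle_wedge (g m g' : R -> X) :
  m 0 = g 0 -> m 1 = g' 0 -> nullhomotopic_in d U (tri_loop (rev_path g) m g') ->
  exists T, fills d U T m (fun _ => g 1) (fun t => g (clamp (5/2 * t))) (fun t => g' (clamp (5/2 * t))).
Proof.
  intros E0 E1 Hnull. apply nullhomotopic_in_fills in Hnull as [H [c [e HH]]].
  destruct (fills_based d U _ _ _ _ HH) as [F HF].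
  destruct (fills_wedge d U _ _ _ HF) as [T HT].
  exists T. apply (fills_ext d U _ _ _ _ _ _ _ _ _ HT).
  - intros s Hs. split.
    + rewrite ramp_wedge_bottom by exact Hs. apply tri_loop_middle; [|exact Hs].
      unfold rev_path. rewrite Rminus_eq_0. congruence.
    + replace 0 with (0 / 3) by field. rewrite tri_loop_first by lra.
      unfold rev_path. f_equal. ring.
  - intros t Ht. pose proof (clamp_in_01 (5/2 * t)). split.
    + rewrite ramp_wedge_left, tri_loop_first by lra. unfold rev_path. f_equal. ring.
    + rewrite ramp_wedge_right by lra. apply tri_loop_last; [exact E1 | lra].
Qed.

Lemma fills_juxtapose T1 T2 T3 b1 b2 b3 t1 t2 t3 l r1 r2 r :
  fills d U T1 b1 t1 l r1 -> fills d U T2 b2 t2 r1 r2 -> fills d U T3 b3 t3 r2 r ->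
  fills d U (fun s t => tri_loop (fun u => T1 u t) (fun u => T2 u t) (fun u => T3 u t) s)
    (tri_loop b1 b2 b3) (tri_loop t1 t2 t3) l r.
Proof.
  intros [[C1 U1] [BT1 LR1]] [[C2 U2] [BT2 LR2]] [[C3 U3] [BT3 LR3]].
  split; [split|split].
  - unfold tri_loop. apply continuous2_on_paste_s; [| apply continuous2_on_paste_s |].
    + apply (continuous2_on_comp d _ square T1); [exact C1 | continuous2_tac.. |].
      intros s t [Hs Ht]. split; lra.
    + apply (continuous2_on_comp d _ square T2); [exact C2 | continuous2_tac.. |].
      intros s t [Hs Ht]. split; lra.
    + apply (continuous2_on_comp d _ square T3); [exact C3 | continuous2_tac.. |].
      intros s t [Hs Ht]. split; lra.
    + intros t Ht. cbv beta.
      replace (3 * (2/3) - 1) with 1 by field. replace (3 * (2/3) - 2) with 0 by field.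
      destruct (LR2 t Ht), (LR3 t Ht). congruence.
    + intros t Ht. cbv beta. destruct Rle_dec; [|lra].
      replace (3 * (1/3) - 1) with 0 by field. replace (3 * (1/3)) with 1 by field.
      destruct (LR1 t Ht), (LR2 t Ht). congruence.
  - intros s t [Hs Ht]. unfold tri_loop.
    repeat destruct Rle_dec; [apply U1 | apply U2 | apply U3]; split; lra.
  - intros s Hs. split; apply tri_loop_ext; try exact Hs; intros u Hu;
      [apply BT1 | apply BT2 | apply BT3 | apply BT1 | apply BT2 | apply BT3]; exact Hu.
  - intros t Ht. unfold tri_loop. split.
    + destruct Rle_dec; [|lra]. rewrite Rmult_0_r. apply LR1, Ht.
    + do 2 (destruct Rle_dec; [lra|]). replace (3 * 1 - 2) with 1 by ring. apply LR3, Ht.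
Qed.

Lemma nullhomotopic_in_tri_loop_glue (g1 g2 g3 m1 m2 m3 : R -> X) :
  m1 0 = g1 0 -> m1 1 = g2 0 -> m2 0 = g2 0 -> m2 1 = g3 0 -> m3 0 = g3 0 -> m3 1 = g1 0 ->
  nullhomotopic_in d U (tri_loop (rev_path g1) m1 g2) ->
  nullhomotopic_in d U (tri_loop (rev_path g2) m2 g3) ->
  nullhomotopic_in d U (tri_loop (rev_path g3) m3 g1) ->
  nullhomotopic_in d U (tri_loop m1 m2 m3).
Proof.
  intros E1 E2 E3 E4 E5 E6 N1 N2 N3.
  assert (Hapex12 := tri_loop_closed _ _ _ N1). assert (Hapex23 := tri_loop_closed _ _ _ N2).
  unfold rev_path in Hapex12, Hapex23. rewrite Rminus_0_r in Hapex12, Hapex23.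
  destruct (triangle_wedge _ _ _ E1 E2 N1) as [T1 HT1].
  destruct (triangle_wedge _ _ _ E3 E4 N2) as [T2 HT2].
  destruct (triangle_wedge _ _ _ E5 E6 N3) as [T3 HT3].
  apply nullhomotopic_in_fills.
  eexists _, (g1 1), _.
  eapply fills_ext; [apply (fills_juxtapose _ _ _ _ _ _ _ _ _ _ _ _ _ HT1 HT2 HT3) | |].
  - intros s Hs. split; [reflexivity|]. unfold tri_loop. repeat destruct Rle_dec; congruence.
  - intros u Hu. split; reflexivity.
Qed.

End TriangleLoops.

(** * Geodesic triangles *)

Section SymmetricDistance.
Context {X : Type} (d : X -> X -> R).
Hypothesis d_sym : forall x y, d x y = d y x.

Lemma geodesic_rev a b c : geodesic d a b c -> geodesic d b a (rev_path c).
Proof.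
  intros [H0 [H1 Hc]]. unfold rev_path. split; [|split].
  - rewrite Rminus_0_r. exact H1.
  - rewrite Rminus_eq_0. exact H0.
  - intros s t Hs Ht. unfold unit_I in *. rewrite Hc, d_sym by (unfold unit_I; lra).
    f_equal. rewrite <- Rabs_Ropp. f_equal. ring.
Qed.

Lemma geod_seg_rev a b q : geod_seg d a b q -> geod_seg d b a q.
Proof.
  intros [c [Gc [t [Ht Eq]]]]. exists (rev_path c). split; [apply geodesic_rev, Gc|].
  exists (1 - t). unfold unit_I in *. split; [lra|]. unfold rev_path. rewrite Eq. f_equal. ring.
Qed.

Lemma triangle_rot x y z q : triangle d x y z q -> triangle d y z x q.
Proof. unfold triangle. tauto. Qed.

Lemma triangle_swap x y z q : triangle d x y z q -> triangle d x z y q.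
Proof.
  unfold triangle. intros [H | [H | H]]; apply geod_seg_rev in H; tauto.
Qed.

Lemma full_triangle_rot x y z p : full_triangle d x y z p -> full_triangle d y z x p.
Proof.
  intros [Ht | [Hnt Hnull]]; [left; apply triangle_rot, Ht | right; split].
  - intros Ht. apply Hnt, triangle_rot, triangle_rot, Ht.
  - intros c1 c2 c3 G1 G2 G3 N. apply (Hnull c3 c1 c2 G3 G1 G2).
    destruct G1 as [_ [E1 _]], G2 as [E2 [E3 _]], G3 as [E4 _].
    apply nullhomotopic_in_tri_loop_rotate; [congruence|].
    apply nullhomotopic_in_tri_loop_rotate; [congruence | exact N].
Qed.

Lemma full_triangle_swap x y z p : full_triangle d x y z p -> full_triangle d x z y p.
Proof.
  intros [Ht | [Hnt Hnull]]; [left; apply triangle_swap, Ht | right; split].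
  - intros Ht. apply Hnt, triangle_swap, Ht.
  - intros c1 c2 c3 G1 G2 G3 N.
    apply (Hnull (rev_path c3) (rev_path c2) (rev_path c1)); try apply geodesic_rev; try assumption.
    destruct G1 as [_ [E1 _]], G2 as [E2 [E3 _]], G3 as [E4 _].
    apply nullhomotopic_in_tri_loop_rev; [congruence | congruence | exact N].
Qed.

End SymmetricDistance.

Lemma edist_axis x y : edist (x, 0) (y, 0) = Rabs (x - y).
Proof.
  unfold edist. cbn [fst snd]. rewrite <- sqrt_Rsqr_abs. f_equal. unfold Rsqr. ring.
Qed.

Section CAT0Space.
Context {X : Type} (d : X -> X -> R).
Hypothesis d_CAT0 : CAT0 d.

Lemma CAT0_sym x y : d x y = d y x.
Proof. destruct d_CAT0 as [[_ [_ [Hsym _]]] _]. apply Hsym. Qed.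

(* The CAT(0) inequality for the degenerate triangle (a, b, b), with sides c, the constant path
   and c' reversed, and comparison triangle (0,0), (d a b,0), (d a b,0): the points c s and c' s
   have the same comparison point. *)
Lemma geodesic_unique a b c c' s :
  geodesic d a b c -> geodesic d a b c' -> 0 <= s <= 1 -> c s = c' s.
Proof.
  intros Gc Gc' Hs.
  destruct d_CAT0 as [[Hpos [Hzero _]] [_ Hcmp]].
  assert (Gb : geodesic d b b (fun _ => b)).
  { split; [reflexivity | split; [reflexivity|]]. intros. rewrite (proj2 (Hzero b b) eq_refl). ring. }
  assert (E1 : edist (0, 0) (d a b, 0) = d a b).
  { rewrite edist_axis, Rminus_0_l, Rabs_Ropp, Rabs_right; [reflexivity | apply Rle_ge, Hpos]. }
  assert (E2 : edist (d a b, 0) (d a b, 0) = d b b).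
  { rewrite edist_axis, Rminus_eq_0, Rabs_R0. symmetry. apply Hzero. reflexivity. }
  assert (E3 : edist (d a b, 0) (0, 0) = d b a).
  { rewrite edist_axis, Rminus_0_r, Rabs_right, CAT0_sym; [reflexivity | apply Rle_ge, Hpos]. }
  assert (Hle := Hcmp a b b c (fun _ => b) (rev_path c') (0, 0) (d a b, 0) (d a b, 0)
    Gc Gb (geodesic_rev d CAT0_sym a b c' Gc') E1 E2 E3
    (c, (0, 0), (d a b, 0)) (rev_path c', (d a b, 0), (0, 0))
    ltac:(simpl; auto) ltac:(simpl; auto) s (1 - s)
    ltac:(unfold unit_I; lra) ltac:(unfold unit_I; lra)).
  cbv beta iota in Hle. unfold rev_path, seg in Hle. cbn [fst snd] in Hle.
  replace (1 - (1 - s)) with s in Hle by ring.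
  replace (0 + s * (0 - 0)) with 0 in Hle by ring.
  replace (0 + (1 - s) * (0 - 0)) with 0 in Hle by ring.
  rewrite edist_axis in Hle.
  replace (0 + s * (d a b - 0) - (d a b + (1 - s) * (0 - d a b))) with 0 in Hle by ring.
  rewrite Rabs_R0 in Hle.
  apply Hzero, Rle_antisym; [exact Hle | apply Hpos].
Qed.

Lemma not_full_triangle_nullhomotopic x y z p c1 c2 c3 :
  ~ full_triangle d x y z p ->
  geodesic d x y c1 -> geodesic d y z c2 -> geodesic d z x c3 ->
  nullhomotopic_in d (fun q => q <> p) (tri_loop c1 c2 c3).
Proof.
  intros Hnf G1 G2 G3. apply NNPP. intros Hnot. apply Hnf. right. split.
  - intros Ht. apply Hnf. left. exact Ht.
  - intros c1' c2' c3' G1' G2' G3' Hnull. apply Hnot. revert Hnull.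
    apply nullhomotopic_in_ext. intros s Hs.
    apply tri_loop_ext; try exact Hs; intros u Hu; eapply geodesic_unique; eassumption.
Qed.

Lemma full_triangle_cover o a b c p :
  full_triangle d a b c p ->
  full_triangle d o a b p \/ full_triangle d o b c p \/ full_triangle d o c a p.
Proof.
  intros [[Hab | [Hbc | Hca]] | [_ Hnull]].
  - left. left. right. left. exact Hab.
  - right. left. left. right. left. exact Hbc.
  - right. right. left. right. left. exact Hca.
  - apply NNPP. intros Hnone.
    destruct d_CAT0 as [_ [Hgeod _]].
    destruct (Hgeod a o) as [ga Ga], (Hgeod b o) as [gb Gb], (Hgeod c o) as [gc Gc].
    destruct (Hgeod a b) as [m1 M1], (Hgeod b c) as [m2 M2], (Hgeod c a) as [m3 M3].
    apply (Hnull m1 m2 m3 M1 M2 M3).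
    pose proof (geodesic_rev d CAT0_sym) as Grev.
    assert (Hends : forall x y g, geodesic d x y g -> g 0 = x /\ g 1 = y)
      by (intros x y g [G0 [G1 _]]; split; assumption).
    apply (nullhomotopic_in_tri_loop_glue d _ ga gb gc).
    1-6: destruct (Hends _ _ _ Ga), (Hends _ _ _ Gb), (Hends _ _ _ Gc),
           (Hends _ _ _ M1), (Hends _ _ _ M2), (Hends _ _ _ M3); congruence.
    + apply (not_full_triangle_nullhomotopic o a b); [tauto | apply Grev, Ga | exact M1 | exact Gb].
    + apply (not_full_triangle_nullhomotopic o b c); [tauto | apply Grev, Gb | exact M2 | exact Gc].
    + apply (not_full_triangle_nullhomotopic o c a); [tauto | apply Grev, Gc | exact M3 | exact Ga].
Qed.

End CAT0Space.

Ltac exists_index j :=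
  exists j; split;
    [lia | split; [lia | simpl; solve [eauto using full_triangle_rot, full_triangle_swap]]].

Theorem claim6p1 (X I : Type) (d : X -> X -> R) (C : I -> pt -> Prop) (f : I -> pt -> X)
  (Hcx : euclidean_polygonal_complex d C f) (Hcat : CAT0 d)
  (x1 x2 x3 x4 p : X) (i : nat) :
  (1 <= i <= 4)%nat -> W d x1 x2 x3 x4 i p ->
  exists j : nat, (1 <= j <= 4)%nat /\ j <> i /\ W d x1 x2 x3 x4 j p.
Proof.
  intros Hi HW.
  pose proof (CAT0_sym d Hcat) as Hsym.
  pose proof (fun o a b c => full_triangle_cover d Hcat o a b c p) as Hcover.
  destruct i as [|[|[|[|[|i]]]]]; try lia; simpl in HW;
    [ destruct (Hcover x1 _ _ _ HW) as [Hj | [Hj | Hj]]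
    | destruct (Hcover x2 _ _ _ HW) as [Hj | [Hj | Hj]]
    | destruct (Hcover x3 _ _ _ HW) as [Hj | [Hj | Hj]]
    | destruct (Hcover x4 _ _ _ HW) as [Hj | [Hj | Hj]] ];
    first [ exists_index 1%nat | exists_index 2%nat | exists_index 3%nat | exists_index 4%nat ].
Qed.
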